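(* If $Y$ is a dense subspace of a Tychonoff space $X$, then $|C(X)|\leq nw(Y)^{Nag(Y)}$ and $w(X)\leq nw(Y)^{Nag(Y)}$.
   Context: All spaces are Tychonoff; cardinal invariants take infinite values. $C(X)$ is the set of continuous real-valued functions on $X$; $nw$ is network weight, $w$ weight. The Nagami number $Nag(Y)$ is the minimal cardinality of a family $\mathcal F$ of closed subsets of $\beta Y$ such that for every $y\in Y$ and $z\in\beta Y\setminus Y$ there is $F\in\mathcal F$ with $y\in F$, $z\notin F$. *)

From Stdlib Require Import Reals List.
Open Scope R_scope.

Record topology (X : Type) := Topology {
  is_open : (X -> Prop) -> Prop;
  open_full : is_open (fun _ => True);
  open_inter : forall U V, is_open U -> is_open V -> is_open (fun x => U x /\ V x);
  open_union : forall F : (X -> Prop) -> Prop,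
      (forall U, F U -> is_open U) -> is_open (fun x => exists U, F U /\ U x)
}.
Arguments is_open {X} t U.

Definition is_closed {X : Type} (t : topology X) (F : X -> Prop) : Prop :=
  is_open t (fun x => ~ F x).

Definition R_open (U : R -> Prop) : Prop :=
  forall x, U x -> exists eps, eps > 0 /\ forall y, Rabs (y - x) < eps -> U y.

Definition continuous_R {X : Type} (t : topology X) (f : X -> R) : Prop :=
  forall U, R_open U -> is_open t (fun x => U (f x)).

Definition continuous {X Z : Type} (tX : topology X) (tZ : topology Z) (f : X -> Z) : Prop :=
  forall U, is_open tZ U -> is_open tX (fun x => U (f x)).

Definition CX {X : Type} (t : topology X) : Type := { f : X -> R | continuous_R t f }.

Definition T1 {X : Type} (t : topology X) : Prop :=
  forall x : X, is_closed t (fun y => y = x).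

Definition completely_regular {X : Type} (t : topology X) : Prop :=
  forall (x : X) (F : X -> Prop), is_closed t F -> ~ F x ->
    exists f : X -> R, continuous_R t f /\ (forall y, 0 <= f y <= 1) /\
      f x = 0 /\ (forall y, F y -> f y = 1).

Definition tychonoff {X : Type} (t : topology X) : Prop := T1 t /\ completely_regular t.

Definition hausdorff {X : Type} (t : topology X) : Prop :=
  forall x y : X, x <> y -> exists U V, is_open t U /\ is_open t V /\ U x /\ V y /\
    (forall z, ~ (U z /\ V z)).

Definition compact {X : Type} (t : topology X) : Prop :=
  forall F : (X -> Prop) -> Prop, (forall U, F U -> is_open t U) ->
    (forall x, exists U, F U /\ U x) ->
    exists l : list (X -> Prop), (forall U, In U l -> F U) /\
      (forall x, exists U, In U l /\ U x).

Definition dense {X : Type} (t : topology X) (Y : X -> Prop) : Prop :=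
  forall U, is_open t U -> (exists x, U x) -> exists y, Y y /\ U y.

Definition subspace_open {X : Type} (t : topology X) (Y : X -> Prop)
  (V : {x | Y x} -> Prop) : Prop :=
  exists U, is_open t U /\ forall y : {x | Y x}, V y <-> U (proj1_sig y).

Lemma subspace_full {X : Type} (t : topology X) (Y : X -> Prop) :
  subspace_open t Y (fun _ => True).
Proof. exists (fun _ => True); split; [apply open_full | tauto]. Qed.

Lemma subspace_inter {X : Type} (t : topology X) (Y : X -> Prop) U V :
  subspace_open t Y U -> subspace_open t Y V -> subspace_open t Y (fun x => U x /\ V x).
Proof.
  intros [U' [HU HU']] [V' [HV HV']].
  exists (fun x => U' x /\ V' x); split; [apply open_inter; auto|].
  intro y; rewrite HU', HV'; tauto.
Qed.

Lemma subspace_union {X : Type} (t : topology X) (Y : X -> Prop)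
  (F : ({x | Y x} -> Prop) -> Prop) :
  (forall U, F U -> subspace_open t Y U) ->
  subspace_open t Y (fun x => exists U, F U /\ U x).
Proof.
  intros H.
  exists (fun x => exists W, (is_open t W /\ exists U, F U /\
            forall y : {x | Y x}, U y <-> W (proj1_sig y)) /\ W x).
  split.
  - apply open_union. intros W [HW _]; exact HW.
  - intros y; split.
    + intros [U [HFU HUy]]. destruct (H U HFU) as [W [HW HW']].
      exists W; split; [split; [exact HW | exists U; split; assumption] | apply HW'; exact HUy].
    + intros [W [[HW [U [HFU HUW]]] HWy]]. exists U; split; [assumption | apply HUW; exact HWy].
Qed.

Definition subspace {X : Type} (t : topology X) (Y : X -> Prop) : topology {x | Y x} :=
  Topology _ (subspace_open t Y) (subspace_full t Y) (subspace_inter t Y) (subspace_union t Y).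

Definition network {X N : Type} (t : topology X) (Nw : N -> X -> Prop) : Prop :=
  forall U x, is_open t U -> U x -> exists n, Nw n x /\ forall y, Nw n y -> U y.

Definition base {X B : Type} (t : topology X) (Bs : B -> X -> Prop) : Prop :=
  (forall i, is_open t (Bs i)) /\
  (forall U x, is_open t U -> U x -> exists i, Bs i x /\ forall y, Bs i y -> U y).

Definition infinite_type (T : Type) : Prop := exists g : nat -> T, forall m n, g m = g n -> m = n.

Definition stone_cech {Y Z : Type} (tY : topology Y) (tZ : topology Z) (e : Y -> Z) : Prop :=
  compact tZ /\ hausdorff tZ /\
  (forall a b, e a = e b -> a = b) /\
  continuous tY tZ e /\
  (forall V, is_open tY V -> exists U, is_open tZ U /\ forall y, V y <-> U (e y)) /\
  dense tZ (fun z => exists y, e y = z) /\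
  (forall f : Y -> R, continuous_R tY f -> (exists M, forall y, Rabs (f y) <= M) ->
     exists g : Z -> R, continuous_R tZ g /\ forall y, g (e y) = f y).

Definition nagami_family {Y Z K : Type} (tZ : topology Z) (e : Y -> Z) (Fam : K -> Z -> Prop) : Prop :=
  (forall k, is_closed tZ (Fam k)) /\
  (forall (y : Y) (z : Z), (~ exists y', e y' = z) -> exists k, Fam k (e y) /\ ~ Fam k z).

(* Restriction embeds C(X) into C(Y), Y being dense. A continuous f on Y is determined by the
   following data, indexed by a finite set A of members of the Nagami family and a scale j: a
   finite table of pairs (lp, m), where lp lists pairs of network elements, each naming an open
   set of beta Y that separates them, and m is an integer such that (j+1) f stays within 2 of m
   on the points of Y whose image lies in the Nagami sets of A and in the open sets named by lp.
   Two applications of compactness of beta Y show that around every point such a table exists;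
   two functions sharing all tables then differ by less than 4/(j+1) for every j. The tables form
   a set of size at most |N|^|K|, by Hessenberg's theorem k * k = k for infinite k. Finally a
   completely regular space has the cozero sets [f < 1/2], f in C(X), as a base. *)

From Stdlib Require Import Reals List Lra Lia ZArith FinFun.
From Stdlib Require Import Classical ClassicalEpsilon.
From Stdlib Require Import FunctionalExtensionality PropExtensionality ProofIrrelevance.
From Stdlib Require Cantor.
From mathcomp Require boolp classical_sets.
(* Last, so that [compact] is the one of Defs rather than of Reals. *)
From Pilot Require Import Defs.
Open Scope R_scope.

(** * Cardinal arithmetic *)

Definition card_le (A B : Type) : Prop := exists f : A -> B, Injective f.

Lemma card_le_refl (A : Type) : card_le A A.
Proof. exists (fun a => a); intros x y E; exact E. Qed.

Lemma card_le_trans (A B C : Type) : card_le A B -> card_le B C -> card_le A C.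
Proof.
  intros [f Hf] [h Hh]; exists (fun a => h (f a)); intros x y E; apply Hf, Hh, E.
Qed.

Lemma card_le_prod (A B C D : Type) :
  card_le A C -> card_le B D -> card_le (A * B) (C * D).
Proof.
  intros [f Hf] [h Hh]; exists (fun p => (f (fst p), h (snd p))).
  intros [a b] [a' b'] E; injection E as E1 E2; f_equal; auto.
Qed.

Lemma card_le_option (A B : Type) : card_le A B -> card_le (option A) (option B).
Proof.
  intros [f Hf]; exists (option_map f).
  intros [a|] [b|] E; simpl in E; try discriminate; auto.
  injection E as E; f_equal; auto.
Qed.

Lemma card_le_list (A B : Type) : card_le A B -> card_le (list A) (list B).
Proof.
  intros [f Hf]; exists (map f).
  intros l; induction l as [|a l IH]; intros [|b l'] E; simpl in E; try discriminate; auto.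
  injection E as E1 E2; f_equal; auto.
Qed.

Lemma card_le_Z_nat : card_le Z nat.
Proof.
  exists (fun z => match z with
           | Z0 => 0%nat
           | Zpos q => (2 * Pos.to_nat q)%nat
           | Zneg q => (2 * Pos.to_nat q + 1)%nat end).
  intros [|a|a] [|b|b] E; try lia; f_equal; apply Pos2Nat.inj; lia.
Qed.

Lemma injective_on_left_inverse (A B : Type) (D : A -> Prop) (f : A -> B) :
  inhabited A -> (forall x y, D x -> D y -> f x = f y -> x = y) ->
  exists r : B -> A, forall a, D a -> r (f a) = a.
Proof.
  intros inhA Hf.
  exists (fun b => epsilon inhA (fun a => D a /\ f a = b)).
  intros a Da.
  destruct (epsilon_spec inhA (fun a' => D a' /\ f a' = f a)) as [Da' E]; eauto.
Qed.

Lemma card_le_arrow (A B K N : Type) :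
  inhabited A -> inhabited N -> card_le A K -> card_le B N -> card_le (A -> B) (K -> N).
Proof.
  intros inhA [n0] [iK HK] [iN HN].
  destruct (injective_on_left_inverse A K (fun _ => True) iK inhA) as [r Hr];
    [intros x y _ _; apply HK|].
  exists (fun psi k => iN (psi (r k))).
  intros psi1 psi2 E; apply functional_extensionality; intros a.
  apply (f_equal (fun F => F (iK a))) in E.
  rewrite Hr in E by exact I; apply HN, E.
Qed.

Lemma zorn_preorder (T : Type) (R : T -> T -> Prop) : inhabited T ->
  (forall t, R t t) -> (forall r s t, R r s -> R s t -> R r t) ->
  (forall C : T -> Prop, (forall s t, C s -> C t -> R s t \/ R t s) ->
     exists t, forall s, C s -> R s t) ->
  exists t, forall s, R t s -> R s t.
Proof.
  intros [t0] Hr Ht Hc.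
  pose (Rb := fun a b => boolp.asbool (R a b)).
  assert (E : forall a b, Rb a b = true <-> R a b).
  { intros a b; unfold Rb; destruct (boolp.asboolP (R a b)); split; auto; discriminate. }
  destruct (@classical_sets.ZL_preorder T t0 Rb) as [t Hm].
  - intro t; apply E; auto.
  - intros r s u H1 H2; apply E; apply E in H1; apply E in H2; eauto.
  - intros C HC; destruct (Hc C) as [t Ht'].
    + intros s u Hs Hu; destruct (HC s u Hs Hu) as [H|H]; [left|right]; apply E; exact H.
    + exists t; intros s Hs; apply E; auto.
  - exists t; intros s Hs; apply E, Hm, E, Hs.
Qed.

Lemma glue_compatible (I A C : Type) (Ch : I -> Prop) (D : I -> A -> Prop)
  (h : I -> A -> C) : inhabited C ->
  (forall i j a, Ch i -> Ch j -> D i a -> D j a -> h i a = h j a) ->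
  exists hs : A -> C, forall i a, Ch i -> D i a -> hs a = h i a.
Proof.
  intros inhC Hcomp.
  exists (fun a => epsilon inhC (fun c => exists i, Ch i /\ D i a /\ h i a = c)).
  intros i a Hi Da.
  destruct (epsilon_spec inhC (fun c => exists i, Ch i /\ D i a /\ h i a = c))
    as [j [Hj [Dj <-]]]; eauto.
Qed.

Section Comparability.
Variables A B : Type.
Variable b0 : B.

Record partial_injection := PartialInjection {
  pdom : A -> Prop;
  pmap : A -> B;
  pmap_inj : forall x y, pdom x -> pdom y -> pmap x = pmap y -> x = y }.

Definition pextends (p q : partial_injection) : Prop :=
  (forall a, pdom p a -> pdom q a) /\ (forall a, pdom p a -> pmap q a = pmap p a).

Lemma partial_injection_premaximal :
  exists p, forall q, pextends p q -> pextends q p.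
Proof.
  apply zorn_preorder.
  - constructor; exists (fun _ => False) (fun _ => b0); tauto.
  - intro p; split; auto.
  - intros p q r [Dpq Mpq] [Dqr Mqr]; split; auto.
    intros a Da; rewrite Mqr by auto; auto.
  - intros Ch Htot.
    destruct (glue_compatible _ _ _ Ch pdom pmap (inhabits b0)) as [hs Hhs].
    { intros p q a Hp Hq Dp Dq.
      destruct (Htot p q Hp Hq) as [[_ M]|[_ M]]; [symmetry|]; auto. }
    set (Ds := fun a => exists p, Ch p /\ pdom p a).
    assert (Hinj : forall x y, Ds x -> Ds y -> hs x = hs y -> x = y).
    { intros x y [p [Hp Dx]] [q [Hq Dy]] E.
      rewrite (Hhs p x Hp Dx), (Hhs q y Hq Dy) in E.
      destruct (Htot p q Hp Hq) as [[Dpq Mpq]|[Dqp Mqp]].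
      - rewrite <- (Mpq x Dx) in E; exact (pmap_inj q x y (Dpq x Dx) Dy E).
      - rewrite <- (Mqp y Dy) in E; exact (pmap_inj p x y Dx (Dqp y Dy) E). }
    exists (PartialInjection Ds hs Hinj).
    intros p Hp; split; simpl.
    + intros a Da; exists p; auto.
    + intros a Da; apply Hhs; auto.
Qed.

Lemma premaximal_total_or_onto (p : partial_injection) :
  (forall q, pextends p q -> pextends q p) ->
  (forall a, pdom p a) \/ (forall b, exists a, pdom p a /\ pmap p a = b).
Proof.
  intros Hmax.
  destruct (classic (forall a, pdom p a)) as [Hall|[a Ha]%not_all_ex_not]; [left; exact Hall|].
  right; intros b; apply NNPP; intros Hb.
  set (D' := fun x => pdom p x \/ x = a).
  set (h' := fun x => if excluded_middle_informative (x = a) then b else pmap p x).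
  assert (Hi : forall x y, D' x -> D' y -> h' x = h' y -> x = y).
  { intros x y Hx Hy; unfold h'.
    destruct (excluded_middle_informative (x = a)) as [->|nx];
    destruct (excluded_middle_informative (y = a)) as [->|ny]; intros E; auto.
    - destruct Hy as [Hy|]; [|contradiction]; exfalso; apply Hb; eauto.
    - destruct Hx as [Hx|]; [|contradiction]; exfalso; apply Hb; eauto.
    - destruct Hx as [Hx|]; [|contradiction]; destruct Hy as [Hy|]; [|contradiction].
      exact (pmap_inj p x y Hx Hy E). }
  assert (Hext : pextends p (PartialInjection D' h' Hi)).
  { split; simpl; [intros x Hx; left; exact Hx|].
    intros x Hx; unfold h'; destruct excluded_middle_informative; [subst; contradiction|auto]. }
  apply Ha, (proj1 (Hmax _ Hext)); simpl; right; reflexivity.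
Qed.

End Comparability.

Lemma card_le_total (A B : Type) : card_le A B \/ card_le B A.
Proof.
  destruct (classic (inhabited B)) as [[b0]|HB].
  2:{ right; exists (fun b => False_rect A (HB (inhabits b))).
      intros x; exfalso; apply HB; exact (inhabits x). }
  destruct (partial_injection_premaximal A B b0) as [p Hp].
  destruct (premaximal_total_or_onto A B p Hp) as [Hall|Honto].
  - left; exists (pmap A B p); intros x y; apply pmap_inj; auto.
  - destruct (Honto b0) as [a0 _]; pose proof (inhabits a0) as inhA.
    right; exists (fun b => epsilon inhA (fun a => pdom A B p a /\ pmap A B p a = b)).
    intros x y E.
    destruct (epsilon_spec inhA _ (Honto x)) as [_ Ex].
    destruct (epsilon_spec inhA _ (Honto y)) as [_ Ey].
    rewrite <- Ex, <- Ey, E; reflexivity.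
Qed.

Lemma card_le_subtype_extend (T : Type) (B C : T -> Prop) :
  card_le {x | B x} {x | C x} ->
  exists h : T -> T, (forall x, B x -> C (h x)) /\
    (forall x y, B x -> B y -> h x = h y -> x = y).
Proof.
  intros [h Hh].
  exists (fun x => match excluded_middle_informative (B x) with
           | left Bx => proj1_sig (h (exist _ x Bx)) | right _ => x end).
  split.
  - intros x Bx; destruct excluded_middle_informative as [Bx'|]; [|contradiction].
    exact (proj2_sig (h _)).
  - intros x y Bx By.
    destruct (excluded_middle_informative (B x)) as [Bx'|]; [|contradiction].
    destruct (excluded_middle_informative (B y)) as [By'|]; [|contradiction].
    intros E; apply (eq_sig_hprop (fun _ => proof_irrelevance _)), Hh in E.
    exact (f_equal (@proj1_sig _ _) E).
Qed.

Section Hessenberg.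
Variable T : Type.
Variable g : nat -> T.
Hypothesis g_inj : Injective g.

Record square_embedding (B : T -> Prop) (f : T * T -> T) : Prop := {
  sq_range : forall n, B (g n);
  sq_closed : forall a b, B a -> B b -> B (f (a, b));
  sq_inj : forall a b a' b', B a -> B b -> B a' -> B b' ->
    f (a, b) = f (a', b') -> a = a' /\ b = b' }.

Lemma square_embedding_range : exists f, square_embedding (fun x => exists n, g n = x) f.
Proof.
  destruct (injective_on_left_inverse nat T (fun _ => True) g (inhabits 0%nat))
    as [r Hr]; [intros x y _ _; apply g_inj|].
  exists (fun p => g (Cantor.to_nat (r (fst p), r (snd p)))); split.
  - intros n; exists n; reflexivity.
  - intros a b _ _; eexists; reflexivity.
  - intros a b a' b' [n <-] [m <-] [n' <-] [m' <-] E; cbn [fst snd] in E.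
    apply g_inj in E; pose proof (f_equal Cantor.of_nat E) as E'.
    rewrite !Cantor.cancel_of_to, !Hr in E' by exact I.
    injection E' as -> ->; auto.
Qed.

Section Extension.
Variables (B : T -> Prop) (f : T * T -> T).
Hypothesis Hsq : square_embedding B f.
Variables (h r : T -> T).
Hypothesis h_out : forall x, B x -> ~ B (h x).
Hypothesis r_h : forall x, B x -> r (h x) = x.

Definition ext_carrier (x : T) : Prop := B x \/ exists y, B y /\ h y = x.

Definition retract (x : T) : T := if excluded_middle_informative (B x) then x else r x.

Definition mark (x : T) : T := g (if excluded_middle_informative (B x) then 0%nat else 1%nat).

(* Pairs outside B x B are sent injectively into h(B), using their retractions to B
   together with a tag recording which coordinates lie in B. *)
Definition ext_pairing (p : T * T) : T :=
  if excluded_middle_informative (B (fst p) /\ B (snd p)) then f p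
  else h (f (f (retract (fst p), retract (snd p)), f (mark (fst p), mark (snd p)))).

Lemma retract_in x : ext_carrier x -> B (retract x).
Proof.
  unfold retract; destruct excluded_middle_informative as [Bx|nBx]; auto.
  intros [Bx|[y [By <-]]]; [contradiction|rewrite r_h; auto].
Qed.

Lemma retract_inj x y : ext_carrier x -> ext_carrier y -> (B x <-> B y) ->
  retract x = retract y -> x = y.
Proof.
  unfold retract; intros Hx Hy Hxy.
  destruct (excluded_middle_informative (B x)) as [Bx|nBx];
  destruct (excluded_middle_informative (B y)) as [By|nBy]; try tauto.
  destruct Hx as [|[x' [Bx' <-]]]; [contradiction|].
  destruct Hy as [|[y' [By' <-]]]; [contradiction|].
  rewrite !r_h by auto; intros ->; reflexivity.
Qed.

Lemma mark_in x : B (mark x).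
Proof. apply (sq_range _ _ Hsq). Qed.

Lemma mark_iff x y : mark x = mark y -> (B x <-> B y).
Proof.
  unfold mark; intros E; apply g_inj in E.
  destruct (excluded_middle_informative (B x)), (excluded_middle_informative (B y));
    try discriminate; tauto.
Qed.

Lemma ext_pairing_agrees a b : B a -> B b -> ext_pairing (a, b) = f (a, b).
Proof.
  intros Ba Bb; unfold ext_pairing; cbn [fst snd].
  destruct excluded_middle_informative; tauto.
Qed.

Lemma square_embedding_extend : square_embedding ext_carrier ext_pairing.
Proof.
  destruct Hsq as [Hg Hcl Hinj].
  assert (Hcode : forall a b, ext_carrier a -> ext_carrier b ->
            B (f (f (retract a, retract b), f (mark a, mark b)))).
  { intros a b Ha Hb; apply Hcl; apply Hcl; auto using retract_in, mark_in. }
  split.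
  - intros n; left; auto.
  - intros a b Ha Hb; unfold ext_pairing; cbn [fst snd].
    destruct excluded_middle_informative as [[Ba Bb]|_].
    + left; auto.
    + right; eexists; split; [apply (Hcode a b Ha Hb)|reflexivity].
  - intros a b a' b' Ha Hb Ha' Hb'; unfold ext_pairing; cbn [fst snd].
    destruct (excluded_middle_informative (B a /\ B b)) as [[Ba Bb]|nab];
    destruct (excluded_middle_informative (B a' /\ B b')) as [[Ba' Bb']|nab'];
      intros E.
    + apply Hinj; auto.
    + exfalso; apply (h_out _ (Hcode a' b' Ha' Hb')); rewrite <- E; auto.
    + exfalso; apply (h_out _ (Hcode a b Ha Hb)); rewrite E; auto.
    + apply (f_equal r) in E; rewrite !r_h in E by auto.
      apply Hinj in E; try apply Hcl; auto using retract_in, mark_in.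
      destruct E as [Er Em].
      apply Hinj in Er; auto using retract_in; apply Hinj in Em; auto using mark_in.
      destruct Er as [Era Erb], Em as [Ema Emb].
      split; apply retract_inj; auto using mark_iff.
Qed.

Lemma ext_carrier_strict : ext_carrier (h (g 0%nat)) /\ ~ B (h (g 0%nat)).
Proof.
  pose proof (sq_range _ _ Hsq 0%nat) as Bg0.
  split; [right; exists (g 0%nat); auto|apply h_out, Bg0].
Qed.

End Extension.

Record square_object := SquareObject {
  carrier : T -> Prop;
  pairing : T * T -> T;
  carrier_square : square_embedding carrier pairing }.

Definition square_extends (o o' : square_object) : Prop :=
  (forall a, carrier o a -> carrier o' a) /\
  (forall a b, carrier o a -> carrier o b -> pairing o' (a, b) = pairing o (a, b)).

Lemma square_chain_bound (Ch : square_object -> Prop) :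
  (forall o o', Ch o -> Ch o' -> square_extends o o' \/ square_extends o' o) ->
  exists u, forall o, Ch o -> square_extends o u.
Proof.
  intros Htot.
  destruct (classic (exists o, Ch o)) as [[o0 Ho0]|Hne].
  2:{ destruct square_embedding_range as [f0 H0].
      exists (SquareObject _ f0 H0); intros o Ho; exfalso; eauto. }
  assert (Hup : forall o1 o2, Ch o1 -> Ch o2 -> exists o, Ch o /\
            (forall x, carrier o1 x -> carrier o x) /\ (forall x, carrier o2 x -> carrier o x)).
  { intros o1 o2 H1 H2; destruct (Htot o1 o2 H1 H2) as [[S _]|[S _]]; eauto. }
  destruct (glue_compatible _ _ _ Ch (fun o p => carrier o (fst p) /\ carrier o (snd p))
              pairing (inhabits (g 0%nat))) as [fs Hfs].
  { intros o o' [a b] Ho Ho' [Ha Hb] [Ha' Hb'].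
    destruct (Htot o o' Ho Ho') as [[_ M]|[_ M]]; [symmetry|]; auto. }
  set (Bs := fun a => exists o, Ch o /\ carrier o a).
  assert (Hsq : square_embedding Bs fs).
  { split.
    - intros n; exists o0; split; auto; apply (sq_range _ _ (carrier_square o0)).
    - intros a b [o1 [H1 Ha]] [o2 [H2 Hb]].
      destruct (Hup o1 o2 H1 H2) as [o [Ho [S1 S2]]].
      exists o; split; auto.
      rewrite (Hfs o (a, b)) by (simpl; auto); apply (carrier_square o); auto.
    - intros a b a' b' [o1 [H1 Ha]] [o2 [H2 Hb]] [o3 [H3 Ha']] [o4 [H4 Hb']].
      destruct (Hup o1 o2 H1 H2) as [p [Hp [Sp1 Sp2]]].
      destruct (Hup o3 o4 H3 H4) as [q [Hq [Sq3 Sq4]]].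
      destruct (Hup p q Hp Hq) as [o [Ho [Sp Sq]]].
      rewrite (Hfs o (a, b)), (Hfs o (a', b')) by (simpl; auto).
      apply (carrier_square o); auto. }
  exists (SquareObject Bs fs Hsq); intros o Ho; split; simpl.
  - intros a Ha; exists o; auto.
  - intros a b Ha Hb; apply (Hfs o (a, b)); simpl; auto.
Qed.

Lemma card_le_square_of_small_complement (B : T -> Prop) (f : T * T -> T) :
  square_embedding B f -> card_le {x | ~ B x} {x | B x} -> card_le (T * T) T.
Proof.
  intros [Hg Hcl Hinj] Hle.
  destruct (card_le_subtype_extend T _ _ Hle) as [v [Hv_in Hv_inj]].
  set (u := fun t => if excluded_middle_informative (B t) then f (t, g 0%nat)
                     else f (v t, g 1%nat)).
  assert (Hu_in : forall t, B (u t)).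
  { intros t; unfold u; destruct excluded_middle_informative; auto. }
  assert (Hu_inj : Injective u).
  { intros x y; unfold u.
    destruct (excluded_middle_informative (B x)) as [Bx|nBx];
    destruct (excluded_middle_informative (B y)) as [By|nBy]; intros E;
      apply Hinj in E; auto; destruct E as [E1 E2]; auto;
      apply g_inj in E2; discriminate. }
  exists (fun p => f (u (fst p), u (snd p))).
  intros [a b] [a' b'] E; apply Hinj in E; auto.
  destruct E as [E1 E2]; apply Hu_inj in E1, E2; simpl in E1, E2; subst; reflexivity.
Qed.

Theorem card_le_square : card_le (T * T) T.
Proof.
  destruct (zorn_preorder _ square_extends) as [[B f Hsq] Hmax].
  - destruct square_embedding_range as [f0 H0]; exact (inhabits (SquareObject _ f0 H0)).
  - intros o; split; auto.
  - intros o1 o2 o3 [S12 M12] [S23 M23]; split; auto.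
    intros a b Ha Hb; rewrite M23 by auto; auto.
  - exact square_chain_bound.
  (* By maximality, B cannot inject into its complement. *)
  - destruct (card_le_total {x | ~ B x} {x | B x}) as [Hle|Hle].
    + exact (card_le_square_of_small_complement B f Hsq Hle).
    + exfalso.
      destruct (card_le_subtype_extend T _ _ Hle) as [h [h_out h_inj]].
      destruct (injective_on_left_inverse T T B h (inhabits (g 0%nat)) h_inj) as [r r_h].
      set (o' := SquareObject _ _ (square_embedding_extend B f Hsq h r h_out r_h)).
      assert (Hext : square_extends (SquareObject B f Hsq) o').
      { split; simpl; [intros a Ha; left; exact Ha|].
        intros a b Ha Hb; apply ext_pairing_agrees; auto. }
      destruct (ext_carrier_strict B f Hsq h h_out) as [Hin Hout].
      apply Hout, (proj1 (Hmax o' Hext)), Hin.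
Qed.

End Hessenberg.

Section Absorption.
Variable T : Type.
Hypothesis T_infinite : infinite_type T.

Lemma card_le_square_infinite : card_le (T * T) T.
Proof. destruct T_infinite as [g g_inj]; exact (card_le_square T g g_inj). Qed.

Lemma card_le_option_infinite : card_le (option T) T.
Proof.
  apply (card_le_trans _ (T * T)); [|exact card_le_square_infinite].
  destruct T_infinite as [g g_inj].
  exists (fun o => match o with None => (g 0%nat, g 1%nat) | Some t => (t, g 0%nat) end).
  intros [a|] [b|] E; try reflexivity.
  - injection E as ->; reflexivity.
  - injection E as _ E; apply g_inj in E; discriminate.
  - injection E as _ E; apply g_inj in E; discriminate.
Qed.

Lemma card_le_list_infinite : card_le (list T) T.
Proof.
  destruct (card_le_trans _ _ _ (card_le_option _ _ card_le_square_infinite)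
              card_le_option_infinite) as [c c_inj].
  exists (fix code l := match l with nil => c None | x :: l' => c (Some (x, code l')) end).
  intros l; induction l as [|x l IH]; intros [|y l'] E; apply c_inj in E;
    try discriminate; auto.
  injection E as -> E; apply IH in E; subst; reflexivity.
Qed.

Lemma card_le_prod_absorb (A B : Type) : card_le A T -> card_le B T -> card_le (A * B) T.
Proof.
  intros HA HB; exact (card_le_trans _ _ _ (card_le_prod _ _ _ _ HA HB)
                         card_le_square_infinite).
Qed.

Lemma card_le_option_absorb (A : Type) : card_le A T -> card_le (option A) T.
Proof.
  intros HA; exact (card_le_trans _ _ _ (card_le_option _ _ HA) card_le_option_infinite).
Qed.

Lemma card_le_list_absorb (A : Type) : card_le A T -> card_le (list A) T.
Proof.
  intros HA; exact (card_le_trans _ _ _ (card_le_list _ _ HA) card_le_list_infinite).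
Qed.

End Absorption.

(** * Compactness and function spaces *)

Lemma list_choice (A B : Type) (R : A -> B -> Prop) (l : list A) :
  (forall a, In a l -> exists b, R a b) ->
  exists lb, forall a, In a l -> exists b, In b lb /\ R a b.
Proof.
  induction l as [|a l IH]; intros H; [exists nil; intros ? []|].
  destruct (H a (or_introl eq_refl)) as [b Hb].
  destruct IH as [lb Hlb]; [intros x Hx; apply H; right; exact Hx|].
  exists (b :: lb); intros x [<-|Hx]; [exists b; simpl; auto|].
  destruct (Hlb x Hx) as [b' [Hb' R']]; exists b'; simpl; auto.
Qed.

Lemma list_sum_split (A B : Type) (l : list (A + B)) :
  exists la lb, (forall a, In (inl a) l -> In a la) /\ (forall b, In (inr b) l -> In b lb).
Proof.
  induction l as [|[a|b] l [la [lb [Ha Hb]]]]; [exists nil, nil; split; intros ? []| |].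
  - exists (a :: la), lb; split; intros x [E|Hx]; try discriminate; simpl; auto.
    injection E as ->; auto.
  - exists la, (b :: lb); split; intros x [E|Hx]; try discriminate; simpl; auto.
    injection E as ->; auto.
Qed.

Lemma is_open_ext (X : Type) (t : topology X) (U V : X -> Prop) :
  (forall x, U x <-> V x) -> is_open t U -> is_open t V.
Proof.
  intros H HU; replace V with U; auto.
  apply functional_extensionality; intro z; apply propositional_extensionality; auto.
Qed.

Lemma is_open_empty (X : Type) (t : topology X) : is_open t (fun _ => False).
Proof.
  apply (is_open_ext X t (fun x => exists U, False /\ U x)); [firstorder|].
  apply open_union; tauto.
Qed.

Lemma is_closed_compl (X : Type) (t : topology X) (U : X -> Prop) :
  is_open t U -> is_closed t (fun x => ~ U x).
Proof.
  unfold is_closed; apply is_open_ext; intros x; split; [tauto|apply NNPP].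
Qed.

Definition exterior {X : Type} (t : topology X) (O : X -> Prop) (z : X) : Prop :=
  exists V, is_open t V /\ V z /\ forall w, V w -> ~ O w.

Lemma exterior_open (X : Type) (t : topology X) (O : X -> Prop) : is_open t (exterior t O).
Proof.
  apply (is_open_ext X t (fun z => exists V,
           (is_open t V /\ forall w, V w -> ~ O w) /\ V z)); [firstorder|].
  apply open_union; tauto.
Qed.

Lemma exterior_disjoint (X : Type) (t : topology X) (O : X -> Prop) (z : X) :
  exterior t O z -> ~ O z.
Proof. intros [V [_ [Vz HV]]]; exact (HV z Vz). Qed.

Lemma compact_indexed_subcover (X I : Type) (t : topology X) (U : I -> X -> Prop) :
  compact t -> (forall i, is_open t (U i)) -> (forall z, exists i, U i z) ->
  exists l : list I, forall z, exists i, In i l /\ U i z.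
Proof.
  intros Hc HU Hcov.
  destruct (Hc (fun V => exists i, V = U i)) as [l [Hl Hlc]].
  - intros V [i ->]; auto.
  - intros z; destruct (Hcov z) as [i Hi]; eauto.
  - destruct (list_choice _ _ (fun V i => V = U i) l Hl) as [li Hli].
    exists li; intros z; destruct (Hlc z) as [V [HV Vz]].
    destruct (Hli V HV) as [i [Hi ->]]; eauto.
Qed.

Lemma compact_finite_subfamily (X I : Type) (t : topology X) (F : I -> X -> Prop)
  (O : X -> Prop) : compact t -> (forall i, is_closed t (F i)) -> is_open t O ->
  (forall z, (forall i, F i z) -> O z) ->
  exists l : list I, forall z, (forall i, In i l -> F i z) -> O z.
Proof.
  intros Hc HF HO Hsub.
  destruct (compact_indexed_subcover X (unit + I) t
              (fun j => match j with inl _ => O | inr i => fun z => ~ F i z end) Hc)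
    as [l Hl].
  - intros [_|i]; [exact HO|exact (HF i)].
  - intros z; destruct (classic (forall i, F i z)) as [Hz|[i Hi]%not_all_ex_not].
    + exists (inl tt); auto.
    + exists (inr i); exact Hi.
  - destruct (list_sum_split _ _ l) as [_ [li [_ Hli]]].
    exists li; intros z Hz; destruct (Hl z) as [[u|i] [Hj Hjz]]; auto.
    exfalso; exact (Hjz (Hz i (Hli i Hj))).
Qed.

Lemma R_open_affine (c a b : R) : 0 < c -> R_open (fun r => Rabs (c * r - a) < b).
Proof.
  intros Hc x Hx; exists ((b - Rabs (c * x - a)) / c); split.
  - apply Rdiv_lt_0_compat; lra.
  - intros y Hy.
    assert (H1 : Rabs (c * y - a) <= Rabs (c * x - a) + c * Rabs (y - x)).
    { replace (c * y - a) with ((c * x - a) + c * (y - x)) by ring.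
      eapply Rle_trans; [apply Rabs_triang|].
      rewrite Rabs_mult, (Rabs_right c) by lra; lra. }
    apply (Rmult_lt_compat_l c) in Hy; auto.
    replace (c * ((b - Rabs (c * x - a)) / c)) with (b - Rabs (c * x - a)) in Hy
      by (field; lra).
    lra.
Qed.

Lemma R_open_lt (a : R) : R_open (fun r => r < a).
Proof.
  intros x Hx; exists (a - x); split; [lra|].
  intros y Hy; unfold Rabs in Hy; destruct Rcase_abs in Hy; lra.
Qed.

Lemma exists_int_near (r : R) : exists z : Z, Rabs (r - IZR z) <= 1.
Proof.
  exists (up r); destruct (archimed r); unfold Rabs; destruct Rcase_abs; lra.
Qed.

Lemma eq_of_scaled_bound (a b : R) : (forall j : nat, INR (S j) * Rabs (a - b) < 4) -> a = b.
Proof.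
  intros H; apply Rminus_diag_uniq, NNPP; intros Hd.
  apply Rabs_pos_lt in Hd.
  destruct (archimed_cor1 (Rabs (a - b) / 4)) as [[|j] [Hj1 Hj2]]; [lra|lia|].
  specialize (H j).
  assert (HI : 0 < INR (S j)) by (apply lt_0_INR; lia).
  apply (Rmult_lt_compat_l (INR (S j))) in Hj1; auto.
  rewrite Rinv_r in Hj1 by lra; lra.
Qed.

Lemma continuous_R_restrict (X : Type) (tX : topology X) (Y : X -> Prop) (f : X -> R) :
  continuous_R tX f -> continuous_R (subspace tX Y) (fun y => f (proj1_sig y)).
Proof.
  intros Hf U HU; exists (fun x => U (f x)); split; [exact (Hf U HU)|tauto].
Qed.

Lemma card_le_CX_dense (X : Type) (tX : topology X) (Y : X -> Prop) :
  dense tX Y -> card_le (CX tX) (CX (subspace tX Y)).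
Proof.
  intros Hd.
  exists (fun f => exist _ _ (continuous_R_restrict X tX Y _ (proj2_sig f))).
  intros [f1 c1] [f2 c2] E; apply (f_equal (@proj1_sig _ _)) in E; simpl in E.
  assert (Hf : f1 = f2).
  { apply functional_extensionality; intro x; apply NNPP; intros Hne.
    set (d := Rabs (f1 x - f2 x)).
    assert (Hdp : 0 < d) by (apply Rabs_pos_lt; lra).
    pose proof (c1 _ (R_open_affine 1 (f1 x) (d / 2) Rlt_0_1)) as O1.
    pose proof (c2 _ (R_open_affine 1 (f2 x) (d / 2) Rlt_0_1)) as O2.
    destruct (Hd _ (open_inter X tX _ _ O1 O2)) as [y [Hy [U1 U2]]].
    - exists x; simpl; rewrite !Rmult_1_l, !Rminus_diag, Rabs_R0; lra.
    - simpl in U1, U2; rewrite !Rmult_1_l in U1, U2.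
      apply (f_equal (fun h => h (exist _ y Hy))) in E; simpl in E; rewrite E in U1.
      unfold d in *; revert U1 U2; unfold Rabs; repeat destruct Rcase_abs; lra. }
  subst; f_equal; apply proof_irrelevance.
Qed.

Lemma base_of_card_le_CX (X : Type) (tX : topology X) (I : Type) :
  completely_regular tX -> card_le (CX tX) I -> exists Bs : I -> X -> Prop, base tX Bs.
Proof.
  intros Hcr [inj Hinj].
  exists (fun i x => exists U, (exists f : CX tX, inj f = i /\
                                 U = (fun x => proj1_sig f x < / 2)) /\ U x).
  split.
  - intros i; apply open_union; intros U [f [_ ->]].
    apply (proj2_sig f (fun r => r < / 2)), R_open_lt.
  - intros U x HU Ux.
    destruct (Hcr x (fun y => ~ U y)) as [f [Hf [_ [Hx H1]]]].
    + apply is_closed_compl, HU.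
    + tauto.
    + exists (inj (exist _ f Hf)); split.
      * exists (fun x => f x < / 2); split; [exists (exist _ f Hf); auto|]; simpl; lra.
      * intros y [V [[f' [E ->]] Hy]]; apply Hinj in E; subst f'; simpl in Hy.
        apply NNPP; intros Hn; rewrite (H1 y Hn) in Hy; lra.
Qed.

(** * Encoding continuous functions by finite tables *)

Section Encoding.
Variables (Y : Type) (tY : topology Y).
Variables (N : Type) (Nw : N -> Y -> Prop).
Hypothesis Hnw : network tY Nw.
Variables (BY : Type) (tBY : topology BY) (e : Y -> BY).
Hypothesis Hsc : stone_cech tY tBY e.
Variables (K : Type) (Fam : K -> BY -> Prop).
Hypothesis Hnag : nagami_family tBY e Fam.

Definition separator (pr : N * N) (O : BY -> Prop) : Prop :=
  is_open tBY O /\ (forall y, Nw (fst pr) y -> O (e y)) /\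
  (forall y, Nw (snd pr) y -> exterior tBY O (e y)).

(* Only meaningful when [pr] admits a separator. *)
Definition sep_open (pr : N * N) : BY -> Prop :=
  epsilon (inhabits (fun _ => True)) (separator pr).

Definition sep_inter (lp : list (N * N)) (z : BY) : Prop :=
  forall pr, In pr lp -> sep_open pr z.

Definition fam_inter (A : list K) (z : BY) : Prop := forall k, In k A -> Fam k z.

Definition near_grid (f : Y -> R) (j : nat) (m : Z) (y : Y) : Prop :=
  Rabs (INR (S j) * f y - IZR m) < 2.

Lemma sep_inter_open (lp : list (N * N)) :
  (forall pr, In pr lp -> separator pr (sep_open pr)) -> is_open tBY (sep_inter lp).
Proof.
  induction lp as [|pr lp IH]; intros H.
  - apply (is_open_ext _ _ (fun _ => True)); [|apply open_full].
    intros z; split; [intros _ ? []|auto].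
  - apply (is_open_ext _ _ (fun z => sep_open pr z /\ sep_inter lp z)).
    + intros z; split; [intros [H1 H2] pr' [<-|Hp]; auto|].
      intros Hz; split; [apply Hz; left; reflexivity|intros pr' Hp; apply Hz; right; exact Hp].
    + apply open_inter; [apply (H pr (or_introl eq_refl))|].
      apply IH; intros pr' Hp; apply H; right; exact Hp.
Qed.

Lemma separator_exists (yp yq : Y) : yp <> yq ->
  exists pr, Nw (fst pr) yp /\ Nw (snd pr) yq /\ separator pr (sep_open pr).
Proof.
  intros Hne; destruct Hsc as [_ [Hh [Hi [Hc _]]]].
  destruct (Hh (e yp) (e yq)) as [U [V [HU [HV [Up [Vq Hd]]]]]]; [intros E; apply Hne, Hi, E|].
  destruct (Hnw (fun x => U (e x)) yp (Hc U HU) Up) as [n1 [Hn1 Hn1U]].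
  destruct (Hnw (fun x => V (e x)) yq (Hc V HV) Vq) as [n2 [Hn2 Hn2V]].
  exists (n1, n2); do 2 (split; [assumption|]).
  unfold sep_open; apply epsilon_spec; exists U; split; [exact HU|split; [exact Hn1U|]].
  intros y Hy; exists V; split; [exact HV|split; [exact (Hn2V y Hy)|]].
  intros w Vw Uw; exact (Hd w (conj Uw Vw)).
Qed.

Lemma nagami_image (y0 : Y) (z : BY) :
  (forall k, Fam k (e y0) -> Fam k z) -> exists y, e y = z.
Proof.
  intros H; apply NNPP; intros Hz.
  destruct (proj2 Hnag y0 z Hz) as [k [Hk Hnk]]; exact (Hnk (H k Hk)).
Qed.

Definition grid_certificate (f : Y -> R) (j : nat) (y0 : Y)
  (c : list K * list (N * N) * Z) : Prop :=
  let '(A, lp, m) := c in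
  fam_inter A (e y0) /\ (forall pr, In pr lp -> separator pr (sep_open pr)) /\
  forall y, fam_inter A (e y) -> sep_inter lp (e y) -> near_grid f j m y.

(* Compactness of beta Y: a point of beta Y outside the open set where [(j+1) f] is near [m]
   is cut off either by a member of the Nagami family containing [e y0] (if it lies outside
   [e Y]) or by the exterior of a separator of [yp] from it. *)
Lemma grid_certificate_exists (f : Y -> R) (j : nat) (y0 yp : Y) (m : Z) :
  continuous_R tY f -> Rabs (INR (S j) * f yp - IZR m) <= 1 ->
  exists A lp, grid_certificate f j y0 (A, lp, m) /\ sep_inter lp (e yp).
Proof.
  intros Hf Hm; destruct Hsc as [Hcomp [_ [_ [_ [Hemb _]]]]].
  destruct (Hemb _ (Hf _ (R_open_affine (INR (S j)) (IZR m) 2 (lt_0_INR _ (Nat.lt_0_succ j)))))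
    as [U [HU HUe]].
  destruct (compact_finite_subfamily BY
              ({k | Fam k (e y0)} + {pr | Nw (fst pr) yp /\ separator pr (sep_open pr)}) tBY
              (fun i => match i with
                        | inl k => Fam (proj1_sig k)
                        | inr pr => fun z => ~ exterior tBY (sep_open (proj1_sig pr)) z end)
              U Hcomp) as [l Hl].
  - intros [k|pr]; [apply (proj1 Hnag)|apply is_closed_compl, exterior_open].
  - exact HU.
  - intros z Hz.
    destruct (nagami_image y0 z) as [yq <-]; [intros k Hk; exact (Hz (inl (exist _ k Hk)))|].
    apply HUe, NNPP; intros Hq.
    assert (Hne : yp <> yq) by (intros <-; apply Hq; lra).
    destruct (separator_exists yp yq Hne) as [pr [Hp [Hq' Hsep]]].
    exact (Hz (inr (exist _ pr (conj Hp Hsep))) (proj2 (proj2 Hsep) yq Hq')).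
  - destruct (list_sum_split _ _ l) as [ks [prs [Hks Hprs]]].
    exists (map (@proj1_sig _ _) ks), (map (@proj1_sig _ _) prs); split; [split; [|split]|].
    + intros k Hk; apply in_map_iff in Hk as [[k' Hk'] [<- _]]; exact Hk'.
    + intros pr Hpr; apply in_map_iff in Hpr as [[pr' Hp'] [<- _]]; exact (proj2 Hp').
    + intros y HA Hlp; apply HUe, Hl; intros [k|pr] Hi.
      * apply HA, in_map_iff; exists k; auto.
      * intros Hext; apply (exterior_disjoint _ _ _ _ Hext), Hlp, in_map_iff; exists pr; auto.
    + intros pr Hpr; apply in_map_iff in Hpr as [[pr' Hp'] [<- _]].
      simpl; destruct Hp' as [Hn [_ [Hin _]]]; exact (Hin yp Hn).
Qed.

Definition good_table (f : Y -> R) (A : list K) (j : nat) (L : list (list (N * N) * Z)) : Prop :=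
  forall y, fam_inter A (e y) ->
    (exists d, In d L /\ sep_inter (fst d) (e y)) /\
    (forall d, In d L -> sep_inter (fst d) (e y) -> near_grid f j (snd d) y).

Lemma good_table_exists (f : Y -> R) (j : nat) (y0 : Y) : continuous_R tY f ->
  exists A, fam_inter A (e y0) /\ exists L, good_table f A j L.
Proof.
  intros Hf; destruct Hsc as [Hcomp _].
  destruct (compact_finite_subfamily BY
              ({k | Fam k (e y0)} + {c | grid_certificate f j y0 c}) tBY
              (fun i => match i with
                        | inl k => Fam (proj1_sig k)
                        | inr c => fun z => ~ sep_inter (snd (fst (proj1_sig c))) z end)
              (fun _ => False) Hcomp) as [l Hl].
  - intros [k|[[[A lp] m] Hc]]; [apply (proj1 Hnag)|].
    apply is_closed_compl, sep_inter_open, (proj1 (proj2 Hc)).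
  - apply is_open_empty.
  - intros z Hz.
    destruct (nagami_image y0 z) as [yp <-]; [intros k Hk; exact (Hz (inl (exist _ k Hk)))|].
    destruct (exists_int_near (INR (S j) * f yp)) as [m Hm].
    destruct (grid_certificate_exists f j y0 yp m Hf Hm) as [A [lp [Hc Hp]]].
    exact (Hz (inr (exist _ (A, lp, m) Hc)) Hp).
  - destruct (list_sum_split _ _ l) as [ks [cs [Hks Hcs]]].
    set (cert_fam := fun c : {c | grid_certificate f j y0 c} => fst (fst (proj1_sig c))).
    exists (map (@proj1_sig _ _) ks ++ flat_map cert_fam cs); split.
    + intros k Hk; apply in_app_or in Hk as [Hk|Hk].
      * apply in_map_iff in Hk as [[k' Hk'] [<- _]]; exact Hk'.
      * apply in_flat_map in Hk as [[[[A lp] m] Hc] [_ Hk]]; exact (proj1 Hc k Hk).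
    + exists (map (fun c => (snd (fst (proj1_sig c)), snd (proj1_sig c))) cs).
      intros y HA; split.
      * apply NNPP; intros Hno; apply (Hl (e y)); intros [k|c] Hi.
        -- apply HA, in_or_app; left; apply in_map_iff; exists k; auto.
        -- intros Hsep; apply Hno; eexists; split; [apply in_map_iff; exists c; auto|exact Hsep].
      * intros d Hd Hsep; apply in_map_iff in Hd as [c [<- Hc]].
        destruct c as [[[A lp] m] Hcert] eqn:Ec; simpl in *.
        apply (proj2 (proj2 Hcert) y); [|exact Hsep].
        intros k Hk; apply HA, in_or_app; right; apply in_flat_map; exists c; rewrite Ec; auto.
Qed.

Definition table_spec (f : Y -> R) (A : list K) (j : nat)
  (o : option (list (list (N * N) * Z))) : Prop :=
  match o with
  | Some L => good_table f A j L
  | None => ~ exists L, good_table f A j L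
  end.

Definition encode (f : Y -> R) (A : list K) (j : nat) : option (list (list (N * N) * Z)) :=
  epsilon (inhabits None) (table_spec f A j).

Lemma encode_spec (f : Y -> R) (A : list K) (j : nat) : table_spec f A j (encode f A j).
Proof.
  unfold encode; apply epsilon_spec.
  destruct (classic (exists L, good_table f A j L)) as [[L HL]|Hn];
    [exists (Some L)|exists None]; exact HL || exact Hn.
Qed.

Lemma encode_injective (f1 f2 : Y -> R) : continuous_R tY f1 ->
  (forall A j, encode f1 A j = encode f2 A j) -> f1 = f2.
Proof.
  intros H1 E; apply functional_extensionality; intros y0; apply eq_of_scaled_bound; intros j.
  destruct (good_table_exists f1 j y0 H1) as [A [HA [L HL]]].
  pose proof (encode_spec f1 A j) as S1; pose proof (encode_spec f2 A j) as S2.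
  rewrite E in S1; destruct (encode f2 A j) as [L'|]; [|contradiction (S1 (ex_intro _ L HL))].
  destruct (S1 y0 HA) as [[d [Hd Hw]] B1]; destruct (S2 y0 HA) as [_ B2].
  specialize (B1 d Hd Hw); specialize (B2 d Hd Hw); unfold near_grid in B1, B2.
  rewrite <- (Rabs_right (INR (S j))) by (apply Rle_ge, pos_INR); rewrite <- Rabs_mult.
  replace (INR (S j) * (f1 y0 - f2 y0)) with
    ((INR (S j) * f1 y0 - IZR (snd d)) - (INR (S j) * f2 y0 - IZR (snd d))) by ring.
  revert B1 B2; generalize (INR (S j) * f1 y0 - IZR (snd d)), (INR (S j) * f2 y0 - IZR (snd d)).
  intros a b; unfold Rabs; repeat destruct Rcase_abs; lra.
Qed.

Lemma card_le_continuous_tables :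
  card_le (CX tY) (list K * nat -> option (list (list (N * N) * Z))).
Proof.
  exists (fun f a => encode (proj1_sig f) (fst a) (snd a)).
  intros [f1 H1] [f2 H2] E; simpl in E.
  assert (f1 = f2) as <-.
  { apply encode_injective; [exact H1|]; intros A j; exact (f_equal (fun F => F (A, j)) E). }
  f_equal; apply proof_irrelevance.
Qed.

End Encoding.

Lemma card_le_table_space (K N : Type) : infinite_type K -> infinite_type N ->
  card_le (list K * nat -> option (list (list (N * N) * Z))) (K -> N).
Proof.
  intros HK HN.
  assert (HZ : card_le Z N) by exact (card_le_trans _ _ _ card_le_Z_nat HN).
  assert (HNN : card_le (N * N) N)
    by exact (card_le_prod_absorb N HN _ _ (card_le_refl N) (card_le_refl N)).
  apply card_le_arrow.
  - exact (inhabits (nil, 0%nat)).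
  - destruct HN as [g _]; exact (inhabits (g 0%nat)).
  - exact (card_le_prod_absorb K HK _ _ (card_le_list_infinite K HK) HK).
  - apply (card_le_option_absorb N HN), (card_le_list_absorb N HN),
      (card_le_prod_absorb N HN); [|exact HZ].
    exact (card_le_list_absorb N HN _ HNN).
Qed.

Theorem theorem2 :
  forall (X : Type) (tX : topology X), tychonoff tX ->
  forall (Y : X -> Prop), dense tX Y ->
  forall (N : Type) (Nw : N -> {x | Y x} -> Prop),
    infinite_type N -> network (subspace tX Y) Nw ->
  forall (Z : Type) (tZ : topology Z) (e : {x | Y x} -> Z),
    stone_cech (subspace tX Y) tZ e ->
  forall (K : Type) (Fam : K -> Z -> Prop),
    infinite_type K -> nagami_family tZ e Fam ->
  (exists inj : CX tX -> (K -> N), forall f g, inj f = inj g -> f = g) /\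
  (exists Bs : (K -> N) -> X -> Prop, base tX Bs).
Proof.
  intros X tX [_ Hcr] Y Hd N Nw HN Hnw BY tBY e Hsc K Fam HK Hnag.
  assert (Hle : card_le (CX tX) (K -> N)).
  { apply (card_le_trans _ _ _ (card_le_CX_dense X tX Y Hd)).
    apply (card_le_trans _ _ _ (card_le_continuous_tables _ _ N Nw Hnw BY tBY e Hsc K Fam Hnag)).
    exact (card_le_table_space K N HK HN). }
  split; [exact Hle|exact (base_of_card_le_CX X tX _ Hcr Hle)].
Qed.
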